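(* For every integer $M$ there exists a graph $G$ with $\gamma_{\rm i}(G)-\mathrm{IR}(G)\ge M$.
   Context: For $S\subseteq V(G)$ and $x\in S$, a private neighbor of $x$ with respect to $S$ is a vertex of $N[S]\setminus N[S\setminus\{x\}]$, where $N[\cdot]$ denotes closed neighborhood; $S$ is irredundant if every vertex of $S$ has a private neighbor with respect to $S$, and $\mathrm{IR}(G)$ is the maximum size of a maximal irredundant set. Indicated domination game on $G$: two players, Dominator and Staller, alternate. In each round Dominator indicates a vertex $v$ not yet dominated by the vertices previously selected by Staller (a vertex dominates itself and its neighbors), and Staller must select a vertex of $N[v]$, adding it to a set $D$. The game ends when $D$ is a dominating set of $G$. Dominator wants to minimize $|D|$ and Staller to maximize it; the size of $D$ under optimal play of both is the indicated domination number $\gamma_{\rm i}(G)$. *)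

From mathcomp Require Import all_boot all_order all_algebra.
Set Implicit Arguments. Unset Strict Implicit. Unset Printing Implicit Defensive.

Definition simple_graph (T : finType) (e : rel T) : Prop :=
  symmetric e /\ irreflexive e.

Section Graph.
Variables (T : finType) (e : rel T).

Definition cnbh (v : T) : {set T} := [set u | (u == v) || e v u].
Definition cnbhS (S : {set T}) : {set T} := \bigcup_(x in S) cnbh x.

Definition priv (S : {set T}) (x : T) : {set T} :=
  cnbhS S :\: cnbhS (S :\ x).

Definition irredundant (S : {set T}) : bool :=
  [forall x in S, priv S x != set0].

Definition upper_irredundance : nat :=
  \max_(S : {set T} | maxset irredundant S) #|S|.

Definition dominated (D : {set T}) (v : T) : bool := v \in cnbhS D.
Definition dominating (D : {set T}) : bool := [forall v, dominated D v].

(* Value of the indicated domination game from position D (the set of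
   vertices selected so far by Staller), with n moves of fuel.
   Dominator (min) indicates an undominated v, Staller (max) picks
   u in N[v]; each move adds a new vertex to D, so fuel #|T| suffices. *)
Fixpoint igame (n : nat) (D : {set T}) : nat :=
  if dominating D then 0 else
  match n with
  | 0 => 0
  | n'.+1 =>
      \big[minn/#|T|]_(v | ~~ dominated D v)
        \max_(u in cnbh v) (igame n' (u |: D)).+1
  end.

Definition gamma_i : nat := igame #|T| set0.

End Graph.

From mathcomp Require Import all_boot all_order all_algebra.
From mathcomp Require Import zify.
Set Implicit Arguments. Unset Strict Implicit. Unset Printing Implicit Defensive.

(* Take k disjoint copies of the 5-cycle C5, with k >= M. An irredundant set
   of the union meets each copy in an irredundant set of C5, which has at most
   2 vertices, so IR <= 2k. In the game, Staller plays so that a copy needing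
   attention is never finished in fewer than 3 moves: the potential
   "3 - |D| until the copy is dominated, then 0", summed over the copies, drops
   by at most one per move against her answers, so gamma_i >= 3k. *)

Definition staller_potential (T : finType) (e : rel T) (f : {set T} -> nat) : Prop :=
  (forall D, dominating e D -> f D = 0) /\
  (forall D v, ~~ dominated e D v ->
     exists2 u, u \in cnbh e v & f D <= (f (u |: D)).+1).

Section StallerPotential.
Variables (T : finType) (e : rel T) (f : {set T} -> nat).
Hypothesis f_potential : staller_potential e f.

Lemma igame_ge_potential n D : n <= #|T| -> minn n (f D) <= igame e n D.
Proof.
elim: n D => [|n IHn] D le_n_T /=; first by rewrite min0n.
have [f_dominating f_staller] := f_potential.
case: ifP => [/f_dominating -> | _]; first by rewrite minn0.
apply: (big_ind (fun m => minn n.+1 (f D) <= m)).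
- exact: leq_trans (geq_minl _ _) le_n_T.
- by move=> m1 m2 le1 le2; rewrite leq_min le1 le2.
move=> v /f_staller [u Nu le_fD].
apply: leq_trans (leq_bigmax_cond _ Nu).
have := IHn (u |: D) (ltnW le_n_T); lia.
Qed.

Lemma gamma_i_ge_potential : f set0 <= #|T| -> f set0 <= gamma_i e.
Proof.
by move=> le_f0; have := igame_ge_potential set0 (leqnn _); rewrite (minn_idPr le_f0).
Qed.

End StallerPotential.

Section Copies.
Variables (I T : finType) (e : rel T).

Definition copies : rel (I * T) := fun x y => (x.1 == y.1) && e x.2 y.2.

Definition slice (D : {set I * T}) (i : I) : {set T} := [set t | (i, t) \in D].

Lemma simple_copies : simple_graph e -> simple_graph copies.
Proof.
case=> e_sym e_irr; split=> [[i s] [j t] | [i t]]; rewrite /copies /=.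
  by rewrite eq_sym e_sym.
by rewrite e_irr andbF.
Qed.

Lemma in_cnbh_copies x y : (y \in cnbh copies x) = (y.1 == x.1) && (y.2 \in cnbh e x.2).
Proof.
case: x y => [i s] [j t]; rewrite !inE /copies /= xpair_eqE.
by case: (j =P i) => [->|/eqP ji]; rewrite ?eqxx //= eq_sym (negbTE ji).
Qed.

Lemma dominated_copies D i t : dominated copies D (i, t) = dominated e (slice D i) t.
Proof.
apply/bigcupP/bigcupP => [[[j s] js_D] | [s s_D] t_Ns].
  by rewrite in_cnbh_copies => /andP [/= /eqP ij t_Ns]; exists s; rewrite // inE ij.
by exists (i, s); rewrite ?in_cnbh_copies ?eqxx //; rewrite inE in s_D.
Qed.

Lemma dominating_slice D i : dominating copies D -> dominating e (slice D i).
Proof. by move/forallP=> domD; apply/forallP=> t; rewrite -dominated_copies. Qed.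

Lemma slice_setU1 D i t : slice ((i, t) |: D) i = t |: slice D i.
Proof. by apply/setP=> s; rewrite !inE xpair_eqE eqxx. Qed.

Lemma slice_setD1 D i t : slice (D :\ (i, t)) i = slice D i :\ t.
Proof. by apply/setP=> s; rewrite !inE xpair_eqE eqxx. Qed.

Lemma slice_setU1_neq D i j t : j != i -> slice ((i, t) |: D) j = slice D j.
Proof. by move=> ji; apply/setP=> s; rewrite !inE xpair_eqE (negbTE ji). Qed.

Lemma slice_setD1_neq D i j t : j != i -> slice (D :\ (i, t)) j = slice D j.
Proof. by move=> ji; apply/setP=> s; rewrite !inE xpair_eqE (negbTE ji). Qed.

Lemma card_slices (D : {set I * T}) : #|D| = \sum_i #|slice D i|.
Proof.
rewrite -sum1_card (eq_bigr (fun i => \sum_t ((i, t) \in D))); last first.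
  by move=> i _; rewrite -sum1_card big_mkcond; apply: eq_bigr => t _; rewrite inE.
by rewrite pair_big big_mkcond; apply: eq_bigr => -[i t].
Qed.

Lemma irredundant_slice S i : irredundant copies S -> irredundant e (slice S i).
Proof.
move/forall_inP=> irrS; apply/forall_inP=> t; rewrite inE => /irrS /set0Pn [[j c]].
rewrite inE -!/(dominated _ _ _) !dominated_copies => /andP [priv_c dom_c].
have ji : j == i.
  by apply: contraNT priv_c => ji; rewrite slice_setD1_neq.
rewrite (eqP ji) slice_setD1 in priv_c dom_c.
by apply/set0Pn; exists c; rewrite inE priv_c.
Qed.

Lemma upper_irredundance_copies m :
  (forall S, irredundant e S -> #|S| <= m) -> upper_irredundance copies <= #|I| * m.
Proof.
move=> le_m; apply/bigmax_leqP => S /maxsetp irrS.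
rewrite card_slices -sum_nat_const; apply: leq_sum => i _.
exact/le_m/irredundant_slice.
Qed.

Lemma staller_potential_copies g :
  staller_potential e g -> staller_potential copies (fun D => \sum_i g (slice D i)).
Proof.
case=> g_dominating g_staller; split=> [D domD | D [i t]].
  by apply: big1 => i _; apply/g_dominating/dominating_slice.
rewrite dominated_copies => /g_staller [u Nu le_g].
exists (i, u); first by rewrite in_cnbh_copies eqxx.
rewrite (bigD1 i) //= [X in _ <= X.+1](bigD1 i) //= slice_setU1.
under [X in _ <= (_ + X).+1]eq_bigr => j ji do rewrite slice_setU1_neq //.
by rewrite -addSn leq_add2r.
Qed.

Lemma gamma_i_copies g :
  staller_potential e g -> g set0 <= #|T| -> #|I| * g set0 <= gamma_i copies.
Proof.
move=> g_potential g0_le.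
have slice0 i : slice set0 i = set0 by apply/setP=> t; rewrite !inE.
have := gamma_i_ge_potential (staller_potential_copies g_potential).
under eq_bigr => i _ do rewrite slice0.
by rewrite sum_nat_const card_prod leq_mul2l g0_le orbT; apply.
Qed.

End Copies.

Arguments copies I {T} e.

Definition adj5 (a b : nat) : bool := (a.+1 %% 5 == b) || (b.+1 %% 5 == a).

Definition cycle5 : rel 'I_5 := fun a b => adj5 a b.

Lemma simple_cycle5 : simple_graph cycle5.
Proof.
split=> [a b | [[|[|[|[|[|a]]]]] lt_a5]] //.
by rewrite /cycle5 /adj5 orbC.
Qed.

Lemma all_iota_ord n (P : pred nat) : all P (iota 0 n) = [forall i : 'I_n, P i].
Proof.
apply/allP/forallP=> [allP i | allP j]; first by apply: allP; rewrite mem_iota ltn_ord.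
by rewrite mem_iota => /andP [_ lt_jn]; apply: (allP (Ordinal lt_jn)).
Qed.

Lemma has_iota_ord n (P : pred nat) : has P (iota 0 n) = [exists i : 'I_n, P i].
Proof. by apply/negb_inj; rewrite -all_predC all_iota_ord negb_exists. Qed.

(* Subsets of 'I_5 are mirrored by nat-indexed bit vectors: finset and ordinal
   computations do not reduce (insub goes through the opaque idP), whereas the
   bit-vector versions of the facts about C5 can be checked by evaluation. *)
Definition bits (S : {set 'I_5}) : seq bool := [seq inord j \in S | j <- iota 0 5].

Lemma nth_bits S j : j < 5 -> nth false (bits S) j = (inord j \in S).
Proof. by move=> lt_j5; rewrite (nth_map 0) ?size_iota // nth_iota. Qed.

Lemma count_bits S : count id (bits S) = #|S|.
Proof.
rewrite count_map -val_enum_ord count_map cardE size_filter.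
by rewrite -enumT; apply: eq_count => a; rewrite /= inord_val.
Qed.

Definition bits_dominated (bs : seq bool) (c : nat) : bool :=
  has (fun y => nth false bs y && ((c == y) || adj5 y c)) (iota 0 5).

Lemma dominated_cycle5 S (c : 'I_5) : dominated cycle5 S c = bits_dominated (bits S) c.
Proof.
rewrite /bits_dominated has_iota_ord; apply/bigcupP/existsP => [[a a_S c_Na] | [a]].
  by rewrite inE in c_Na; exists a; rewrite nth_bits // inord_val a_S.
by rewrite nth_bits // inord_val => /andP [a_S c_Na]; exists a; rewrite ?inE.
Qed.

Lemma dominating_cycle5 S :
  dominating cycle5 S = all (bits_dominated (bits S)) (iota 0 5).
Proof. by rewrite all_iota_ord; apply: eq_forallb => c; rewrite dominated_cycle5. Qed.

Definition bits_add (bs : seq bool) (u : nat) : seq bool :=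
  [seq (j == u) || nth false bs j | j <- iota 0 5].

Definition bits_del (bs : seq bool) (x : nat) : seq bool :=
  [seq (j != x) && nth false bs j | j <- iota 0 5].

Lemma bits_setU1 S (u : 'I_5) : bits (u |: S) = bits_add (bits S) u.
Proof.
apply/eq_in_map => j; rewrite mem_iota add0n => /andP [_ lt_j5].
by rewrite in_setU1 nth_bits // -(inj_eq val_inj) /= inordK.
Qed.

Lemma bits_setD1 S (x : 'I_5) : bits (S :\ x) = bits_del (bits S) x.
Proof.
apply/eq_in_map => j; rewrite mem_iota add0n => /andP [_ lt_j5].
by rewrite !inE nth_bits // -(inj_eq val_inj) /= inordK.
Qed.

Fixpoint bitvectors n : seq (seq bool) :=
  if n is n'.+1 then [seq b :: bs | b <- [:: true; false], bs <- bitvectors n']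
  else [:: [::]].

Lemma mem_bitvectors bs : bs \in bitvectors (size bs).
Proof. by elim: bs => // b bs IHbs; apply: (allpairs_f cons); first case: b. Qed.

Definition bits_potential (bs : seq bool) : nat :=
  if all (bits_dominated bs) (iota 0 5) then 0 else 3 - count id bs.

Definition bits_irredundant (bs : seq bool) : bool :=
  all (fun x => nth false bs x ==>
    has (fun c => bits_dominated bs c && ~~ bits_dominated (bits_del bs x) c) (iota 0 5))
  (iota 0 5).

Definition bits_staller (bs : seq bool) : bool :=
  all (fun v => ~~ bits_dominated bs v ==>
    has (fun u => ((u == v) || adj5 v u) &&
                  (bits_potential bs <= (bits_potential (bits_add bs u)).+1)) (iota 0 5))
  (iota 0 5).

Lemma cycle5_irredundant_check :
  all (fun bs => bits_irredundant bs ==> (count id bs <= 2)) (bitvectors 5).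
Proof. by vm_compute. Qed.

Lemma cycle5_staller_check : all bits_staller (bitvectors 5).
Proof. by vm_compute. Qed.

Lemma irredundant_cycle5_card S : irredundant cycle5 S -> #|S| <= 2.
Proof.
move=> irrS; rewrite -count_bits.
have /implyP := allP cycle5_irredundant_check _ (mem_bitvectors (bits S)); apply.
apply/allP => x; rewrite mem_iota add0n => /andP [_ lt_x5].
rewrite nth_bits //; apply/implyP => /(forall_inP irrS) /set0Pn [c].
rewrite inE -!/(dominated _ _ _) => /andP [priv_c dom_c].
rewrite has_iota_ord; apply/existsP; exists c.
by rewrite -dominated_cycle5 dom_c -[x](inordK lt_x5) -bits_setD1 -dominated_cycle5.
Qed.

Definition cycle5_potential (D : {set 'I_5}) : nat :=
  if dominating cycle5 D then 0 else 3 - #|D|.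

Lemma cycle5_potential_bits D : cycle5_potential D = bits_potential (bits D).
Proof. by rewrite /cycle5_potential /bits_potential dominating_cycle5 count_bits. Qed.

Lemma cycle5_potential_set0 : cycle5_potential set0 = 3.
Proof. by rewrite cycle5_potential_bits /bits; under eq_map do rewrite in_set0. Qed.

Lemma staller_potential_cycle5 : staller_potential cycle5 cycle5_potential.
Proof.
split=> [D | D v]; first by rewrite /cycle5_potential => ->.
rewrite dominated_cycle5 => undom_v.
have /allP /(_ v) := allP cycle5_staller_check _ (mem_bitvectors (bits D)).
rewrite mem_iota ltn_ord undom_v => /(_ isT) /hasP [u].
rewrite mem_iota add0n => /andP [_ lt_u5] /andP [Nu le_g].
exists (inord u); first by rewrite inE /cycle5 -(inj_eq val_inj) /= inordK.
by rewrite !cycle5_potential_bits bits_setU1 inordK.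
Qed.

Import GRing.Theory Num.Theory.
Local Open Scope ring_scope.

Theorem corollary6p3 (M : int) :
  exists (T : finType) (e : rel T),
    simple_graph e /\
    M <= (gamma_i e)%:Z - (upper_irredundance e)%:Z.
Proof.
pose k := `|M|%N.
exists ('I_k * 'I_5)%type, (copies 'I_k cycle5).
split; first exact/simple_copies/simple_cycle5.
have IR_le : (upper_irredundance (copies 'I_k cycle5) <= k * 2)%N.
  rewrite -[k in (k * 2)%N]card_ord.
  exact/upper_irredundance_copies/irredundant_cycle5_card.
have gamma_ge : (k * 3 <= gamma_i (copies 'I_k cycle5))%N.
  have := gamma_i_copies 'I_k staller_potential_cycle5.
  by rewrite cycle5_potential_set0 !card_ord; apply.
have M_le : M <= k%:Z by rewrite abszE ler_norm.
clearbody k; move: IR_le gamma_ge.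
by move: (gamma_i _) (upper_irredundance _) => gamma IR; lia.
Qed.
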